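(* Let $I$ be an infinite set of positive integers and for each $n \in I$ let $H_n \le S_n$ be a subgroup. Suppose that the minimal degrees $m(H_n)$ are not bounded, i.e. for every constant $K$ there are infinitely many $n \in I$ with $m(H_n) > K$. Suppose moreover that for every $n \in I$ and every $k \le n$, $H_n$ has at most $n^{k/7}$ elements of support $k$. Then the family $(S_n, H_n)_{n \in I}$ is indistinguishable.
   Context: For a finite group $G$, let $\mathrm{Irr}(G)$ be its set of complex irreducible characters and $d_\chi=\chi(e)$. For $H \le G$ let $D_H = \frac{1}{|G|}\sum_{\chi \in \mathrm{Irr}(G)} d_\chi \big|\sum_{h \in H, h \neq e}\chi(h)\big|$ (the $L_1$ distance between the distributions $P_H(\chi)=\frac{d_\chi}{|G|}\sum_{h\in H}\chi(h)$ and $P_{\{e\}}$ on $\mathrm{Irr}(G)$ produced by weak quantum Fourier sampling). A family $(G_i,H_i)_{i \in I}$ with $H_i \le G_i$, $I$ an infinite set of positive integers and $|G_i| \to \infty$, is called distinguishable if there is a constant $c>0$ such that $D_{H_i} \ge (\log|G_i|)^{-c}$ for all sufficiently large $i \in I$, and indistinguishable otherwise. $S_n$ is the symmetric group on $\{1,\ldots,n\}$. For $g \in S_n$, the support $\mathrm{supp}(g)$ is the number of points moved by $g$. The minimal degree of $H \le S_n$ is $m(H) = \min\{\mathrm{supp}(h): h \in H, h \neq e\}$, with the convention $m(\{e\}) = +\infty$. *)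

From HB Require Import structures.
From mathcomp Require Import all_boot all_order all_algebra all_fingroup all_solvable all_field all_character.
From mathcomp Require Import Rstruct.
From Stdlib Require Reals.
Local Open Scope ring_scope.
Notation R := Rdefinitions.R.
Notation ln := Rpower.ln.
Notation Rpower := Rpower.Rpower.
Set Implicit Arguments. Unset Strict Implicit. Unset Printing Implicit Defensive.
Import Order.TTheory GRing.Theory Num.Theory.

Definition supp (n : nat) (g : {perm 'I_n}) : nat := #|[set x | g x != x]|.

(* Minimal degree m(H) of H <= S_n; None encodes +infinity (H trivial). *)
Definition min_degree (n : nat) (H : {group {perm 'I_n}}) : option nat :=
  if [exists h in H, h != 1%g]
  then Some (\big[minn/n]_(h in H | h != 1%g) supp h)
  else None.

Definition min_degree_gt (n : nat) (H : {group {perm 'I_n}}) (K : nat) : Prop :=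
  match min_degree H with None => True | Some m => (K < m)%N end.

Definition Sym_n (n : nat) : {group {perm 'I_n}} := [set: {perm 'I_n}]%G.

Definition DH (gT : finGroupType) (G H : {group gT}) : algC :=
  (#|G|%:R)^-1 * \sum_(i : Iirr G) ('chi[G]_i 1%g * `|\sum_(h in H | h != 1%g) 'chi[G]_i h|)%R.

(* Comparison of a real number x with an algebraic number a (for a real,
   i.e. a \in Num.real, this is exactly x <= a): every rational strictly
   below x is <= a. *)
Definition Rle_algC (x : R) (a : algC) : Prop :=
  forall q : rat, (ratr q < x) -> (ratr q <= a)%R.

Definition distinguishable (I : nat -> Prop) (gT : nat -> finGroupType)
  (G H : forall i, {group gT i}) : Prop :=
  exists c : R, (0 < c)%R /\
    exists N : nat, forall i, I i -> (N <= i)%N ->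
      Rle_algC (Rpower (ln #|G i|%:R) (- c)) (DH (G i) (H i)).

Definition indistinguishable (I : nat -> Prop) (gT : nat -> finGroupType)
  (G H : forall i, {group gT i}) : Prop :=
  ~ @distinguishable I gT G H.

(* By the second orthogonality relation and AM-GM,
   (1/|G|) sum_chi chi(1) |chi(x)| <= 1/m as soon as m^2 |C_G(x)| <= |G|.
   In S_n an element h of support k has at most k/2 nontrivial cycles, hence
   |C(h)| <= (n-k)! k^(k/2); since n(n-1)...(n-k+1) >= (n/3)^k, the weight
   m_h = 2 n^(C+1) a_k, where a_k <= n^(k/7) counts the elements of H of
   support k, is admissible once k >= 28C+21.  Grouping the terms 1/m_h by
   support gives D_H <= (n+1)/(2 n^(C+1)) < n^-C, and for C >= 2c this is
   below (log n!)^-c because log n! < n^2. *)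
From HB Require Import structures.
From mathcomp Require Import all_boot all_order all_algebra all_fingroup all_solvable all_field all_character.
From mathcomp Require Import Rstruct.
From Stdlib Require Reals.
From mathcomp Require Import zify lra.
Set Implicit Arguments. Unset Strict Implicit. Unset Printing Implicit Defensive.
Import Order.TTheory GRing.Theory Num.Theory.
Local Open Scope ring_scope.

Definition cycle_min n (h : {perm 'I_n}) : {set 'I_n} :=
  [set x | (h x != x) && [forall y in porbit h x, (x <= y)%N]].

Section CentralizerOfPerm.

Variables (n : nat) (h : {perm 'I_n}).

Lemma porbit_fixed x y : h x = x -> y \in porbit h x -> y = x.
Proof.
move=> hx /porbitP [i ->]; elim: i => [|i IH]; first by rewrite expg0 perm1.
by rewrite expgSr permM IH.
Qed.

Lemma cycle_min_moved : cycle_min h \subset [set x | h x != x].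
Proof. by apply/subsetP => x; rewrite !inE => /andP[]. Qed.

Lemma cycle_min_cover x :
  h x != x -> exists2 r, r \in cycle_min h & exists i, x = (h ^+ i)%g r.
Proof.
move=> hx; have [r rx0 r_min] := arg_minnP (@nat_of_ord n) (porbit_id h x).
have rx : r \in porbit h x := rx0.
exists r; last by move: rx; rewrite porbit_sym => /porbitP.
have orbit_r : porbit h r = porbit h x by apply/eqP; rewrite eq_porbit_mem.
rewrite inE orbit_r; apply/andP; split; last exact/forall_inP.
apply: contra hx => /eqP hr; move: rx; rewrite porbit_sym => /(porbit_fixed hr) xr.
by rewrite xr hr.
Qed.

Lemma double_card_cycle_min : (2 * #|cycle_min h| <= supp h)%N.
Proof.
have h_cycle_min : h @: cycle_min h \subset [set x | h x != x] :\: cycle_min h.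
  apply/subsetP => _ /imsetP [x + ->]; rewrite !inE (inj_eq perm_inj).
  move=> /andP [hx /forall_inP x_min]; rewrite hx andbT.
  have hx_orbit : h x \in porbit h x by have := mem_porbit h 1 x; rewrite expg1.
  apply: contra hx => /forall_inP hx_min; apply/eqP/val_inj/eqP.
  by rewrite eqn_leq hx_min ?x_min // -porbit_sym.
have := subset_leq_card h_cycle_min.
rewrite card_imset ?cardsD ?(setIidPr cycle_min_moved); last exact: perm_inj.
have := subset_leq_card cycle_min_moved; rewrite /supp; lia.
Qed.

(* A permutation commuting with h is determined by its restriction to the
   fixed points of h and by its values on one point of each cycle of h. *)
Lemma card_cent1_perm :
  (#|'C[h]%g| <= (n - supp h)`! * supp h ^ #|cycle_min h|)%N.
Proof.
pose M := [set x | h x != x]; pose F := ~: M.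
pose phi c := (restr_perm F c, [ffun x => if x \in cycle_min h then c x else x]).
pose fam x := if x \in cycle_min h then mem M else mem [set x].
have commX c i x : c \in 'C[h]%g -> c ((h ^+ i)%g x) = (h ^+ i)%g (c x).
  by move=> /cent1P ch; rewrite -!permM (commuteX i ch).
have comm1 c x : c \in 'C[h]%g -> h (c x) = c (h x).
  by move=> ch; have := commX c 1%N x ch; rewrite expg1.
have cF c : c \in 'C[h]%g -> c \in 'N(F | 'P)%g.
  move=> ch; apply/astabsP => x; rewrite /= !inE comm1 //.
  by rewrite (inj_eq perm_inj).
have phi_inj : {in 'C[h]%g &, injective phi}.
  move=> c1 c2 C1 C2 [e1 /ffunP e2]; apply/permP => x.
  have [xF | xM] := boolP (x \in F).
    by rewrite -(restr_permE (cF _ C1) xF) -(restr_permE (cF _ C2) xF) e1.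
  have [r r_min [i ->]] : exists2 r, r \in cycle_min h & exists i, x = (h ^+ i)%g r.
    by apply: cycle_min_cover; rewrite !inE negbK in xM.
  by have := e2 r; rewrite !ffunE r_min commX // commX // => ->.
have phi_range : phi @: 'C[h]%g \subset
    setX [set p | perm_on F p] [set f | f \in family fam].
  apply/subsetP => _ /imsetP [c ch ->]; rewrite !inE restr_perm_on /=.
  apply/forallP => x; rewrite /fam ffunE; case: ifP => [x_min | _]; last first.
    by rewrite inE.
  have := subsetP cycle_min_moved x x_min; rewrite !inE => hx.
  by rewrite comm1 // (inj_eq perm_inj).
have := subset_leq_card phi_range.
rewrite card_in_imset // cardsX.
have -> : #|[set p | perm_on F p]| = #|F|`!.
  by rewrite -card_perm; apply: eq_card => p; rewrite inE.
have -> : #|F| = (n - supp h)%N by rewrite cardsCs setCK card_ord.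
rewrite (eq_card (B := family fam)) => [|f]; last by rewrite inE.
rewrite card_family foldrE big_map big_enum /= (bigID (mem (cycle_min h))) /=.
rewrite [X in (_ * (_ * X))%N]big1 ?muln1; last first.
  by move=> x /negbTE x_min; rewrite /fam x_min cards1.
rewrite (eq_bigr (fun _ => supp h)) ?prod_nat_const //.
by move=> x x_min; rewrite /fam x_min.
Qed.

End CentralizerOfPerm.

Lemma succ_pow_le k : (k.+1 ^ k <= 3 * k ^ k)%N.
Proof.
case: k => [|k] //; set m := k.+1.
rewrite -(ler_nat R) natrM !natrX.
have m_gt0 : (0 : R) < m%:R by rewrite ltr0n.
have -> : (m.+1%:R : R) = m%:R * (1 + m%:R^-1).
  by rewrite mulrDr mulr1 mulfV ?gt_eqF // -natr1.
rewrite exprMn mulrC ler_pM2r ?exprn_gt0 //.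
have le_exp : 1 + m%:R^-1 <= Rtrigo_def.exp m%:R^-1 :> R.
  exact/RleP/Rpower.exp_ineq1_le.
have ge0 : 0 <= 1 + m%:R^-1 :> R by rewrite addr_ge0 // invr_ge0 ltW.
apply: (le_trans (lerXn2r m _ _ le_exp)); rewrite ?nnegrE ?(le_trans ge0) //.
rewrite expRX -(mulr_natl (m%:R^-1) m) mulfV ?gt_eqF //.
exact/RleP/Rpower.exp_le_3.
Qed.

Lemma expn_le_fact k : (k ^ k <= 3 ^ k * k`!)%N.
Proof.
elim: k => [|k IH] //; rewrite expnS factS.
apply: (leq_trans (leq_mul (leqnn k.+1) (succ_pow_le k))).
rewrite expnS; nia.
Qed.

Lemma fact_le_expn n : (n`! <= n ^ n)%N.
Proof.
rewrite -ffactnn ffact_prod (_ : n ^ n = \prod_(i < n) n)%N.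
  by apply: leq_prod => i _; exact: leq_subr.
by rewrite prod_nat_const card_ord.
Qed.

Lemma expn_fact_le_ffact n k : (k <= n)%N -> (n ^ k * k`! <= k ^ k * n ^_ k)%N.
Proof.
move=> le_kn; rewrite -ffactnn !ffact_prod.
have const_prod m : (m ^ k = \prod_(i < k) m)%N by rewrite prod_nat_const card_ord.
rewrite (const_prod n) (const_prod k) -!big_split /=.
by apply: leq_prod => i _; have := ltn_ord i; nia.
Qed.

Lemma expn_le_ffact n k : (k <= n)%N -> (n ^ k <= 3 ^ k * n ^_ k)%N.
Proof.
move=> le_kn; rewrite -(leq_pmul2r (fact_gt0 k)).
apply: leq_trans (expn_fact_le_ffact le_kn) _.
by rewrite mulnAC leq_mul2r expn_le_fact orbT.
Qed.

(* Taking 14th powers clears the fractional exponents in a^2 <= n^(2k/7)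
   and k^r <= k^(k/2); then n^k <= 3^k n^_k finishes. *)
Lemma sq_mul_expn_le_ffact n k r a e :
  (3 ^ 14 <= n)%N -> (k <= n)%N -> (7 * (2 * e + 1) <= k)%N ->
  (a ^ 7 <= n ^ k)%N -> (2 * r <= k)%N ->
  ((2 * n ^ e * a) ^ 2 * k ^ r <= n ^_ k)%N.
Proof.
move=> n_large le_kn le_ek a_small le_rk.
have k_gt0 : (0 < k)%N by lia.
have n_gt0 : (0 < n)%N by lia.
rewrite -(leq_pmul2l (expn_gt0 3 k)) -(@leq_exp2r _ _ 14) //.
apply: leq_trans (_ : n ^ (k * 14) <= _)%N; last first.
  by rewrite expnM leq_exp2r // expn_le_ffact.
rewrite !expnMn -!expnM.
apply: (@leq_trans (n ^ k * (n ^ 14 * n ^ (e * 2 * 14) * n ^ (k * 4) * n ^ (k * 7)))).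
  apply: leq_mul; [|apply: leq_mul; [apply: leq_mul; [apply: leq_mul|]|]].
  - by rewrite mulnC expnM leq_exp2r //; exact: n_large.
  - by rewrite -expnMn leq_exp2r //; lia.
  - by rewrite -expnD leq_pexp2l //; lia.
  - by rewrite -expnD (_ : 14 + 14 = 7 * 4)%N // !expnM leq_exp2r.
  - apply: (@leq_trans (k ^ (k * 7))); first by rewrite leq_pexp2l //; lia.
    by rewrite !expnM leq_exp2r // leq_exp2r.
rewrite -!expnD leq_pexp2l //; lia.
Qed.

Lemma supp_le n (h : {perm 'I_n}) : (supp h <= n)%N.
Proof. by rewrite /supp -[X in (_ <= X)%N](card_ord n) max_card. Qed.

Lemma sq_mul_card_cent1_le n (h : {perm 'I_n}) e a :
  (3 ^ 14 <= n)%N -> (7 * (2 * e + 1) <= supp h)%N -> (a ^ 7 <= n ^ supp h)%N ->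
  ((2 * n ^ e * a) ^ 2 * #|'C[h]%g| <= n`!)%N.
Proof.
move=> n_large le_e a_small; rewrite -(ffact_fact (supp_le h)).
apply: leq_trans (leq_mul (leqnn _) (card_cent1_perm h)) _.
rewrite mulnA mulnAC leq_mul2r; apply/orP; right.
apply: sq_mul_expn_le_ffact => //; first exact: supp_le.
exact: double_card_cycle_min.
Qed.

Lemma irr_weighted_norm_sum_le (gT : finGroupType) (G : {group gT}) x (m : algC) :
  x \in G -> 0 < m -> m ^+ 2 * #|'C_G[x]%g|%:R <= #|G|%:R ->
  #|G|%:R^-1 * \sum_i 'chi[G]_i 1%g * `|'chi_i x| <= m^-1.
Proof.
move=> xG m_gt0 m_small; set s := \sum_i _.
have G_gt0 : 0 < #|G|%:R :> algC by rewrite ltr0n cardG_gt0.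
have cent_norm : #|'C_G[x]%g|%:R = \sum_i `|'chi[G]_i x| ^+ 2.
  have := second_orthogonality_relation x xG; rewrite class_refl mulr1n => <-.
  by apply: eq_bigr => i _; rewrite normCK.
have amgm : (s * m) *+ 2 <= #|G|%:R + m ^+ 2 * #|'C_G[x]%g|%:R.
  rewrite -(irr_sum_square G) cent_norm mulr_sumr mulr_suml -sumrMnl -big_split /=.
  apply: ler_sum => i _; rewrite -mulrA -exprMn (mulrC _ m).
  apply: (Order.le_of_leif (real_leif_mean_square_scaled _ _)).
    exact/gtr0_real/irr1_gt0.
  exact: realM (gtr0_real m_gt0) (normr_real _).
have sm_le : s * m <= #|G|%:R.
  by rewrite -(ler_pMn2r (n := 2)) //; apply: le_trans amgm _; rewrite mulr2n lerD2l.
by rewrite mulrC ler_pdivrMr // mulrC ler_pdivlMr ?invr_gt0 // invrK.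
Qed.

Lemma DH_le_sum_inv (gT : finGroupType) (G H : {group gT}) (f : gT -> algC) :
  H \subset G ->
  (forall h, h \in H -> h != 1%g -> 0 < f h) ->
  (forall h, h \in H -> h != 1%g -> f h ^+ 2 * #|'C_G[h]%g|%:R <= #|G|%:R) ->
  DH G H <= \sum_(h in H | h != 1%g) (f h)^-1.
Proof.
move=> sHG f_gt0 f_small; rewrite /DH.
apply: (@le_trans _ _ (#|G|%:R^-1 *
    \sum_(h in H | h != 1%g) \sum_i 'chi[G]_i 1%g * `|'chi_i h|)).
  rewrite ler_pM2l ?invr_gt0 ?ltr0n ?cardG_gt0 // exchange_big /=.
  apply: ler_sum => i _; rewrite -mulr_sumr ler_wpM2l ?ler_norm_sum //.
  exact/ltW/irr1_gt0.
rewrite mulr_sumr; apply: ler_sum => h /andP [hH h1].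
by apply: irr_weighted_norm_sum_le; rewrite ?f_gt0 ?f_small ?(subsetP sHG).
Qed.

Lemma sum_inv_card_fiber_le (F : numFieldType) (T : finType) (A : {set T})
    (f : T -> nat) m :
  (forall x, x \in A -> f x <= m)%N ->
  \sum_(x in A) (#|[set y in A | f y == f x]|%:R)^-1 <= m.+1%:R :> F.
Proof.
move=> f_le; rewrite (partition_big (fun x => inord (f x) : 'I_m.+1) predT) //=.
apply: le_trans (_ : _ <= \sum_(j < m.+1) 1) _; last by rewrite sumr_const card_ord.
apply: ler_sum => j _; set c := #|[set y in A | f y == j]|.
have in_fiber x : x \in A -> (inord (f x) == j) = (f x == j).
  by move=> xA; rewrite -val_eqE /= inordK // ltnS f_le.
rewrite (eq_bigr (fun _ => c%:R^-1)) => [|x /andP [xA]]; last first.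
  by rewrite in_fiber // => /eqP ->.
rewrite sumr_const (_ : #|_| = c); last first.
  by apply: eq_card => x; rewrite inE; apply: andb_id2l => /in_fiber.
have [-> | c_gt0] := posnP c; first by rewrite mulr0n.
by rewrite -[c%:R^-1 *+ c]mulr_natr mulVf ?pnatr_eq0 -?lt0n.
Qed.

Lemma bigminn_le (T : finType) (P : pred T) (F : T -> nat) d x :
  P x -> (\big[minn/d]_(i | P i) F i <= F x)%N.
Proof.
move=> Px; have : x \in index_enum T by rewrite mem_index_enum.
elim: (index_enum T) => [//|y r IH]; rewrite inE big_cons => /predU1P [<- | xr].
  by rewrite Px geq_minl.
by case: ifP => _; [rewrite geq_min IH ?orbT | exact: IH].
Qed.

Lemma min_degree_gt_supp n (H : {group {perm 'I_n}}) K h :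
  min_degree_gt H K -> h \in H -> h != 1%g -> (K < supp h)%N.
Proof.
rewrite /min_degree_gt /min_degree; case: ifP => [_ K_lt hH h1 | + _ hH h1].
  by apply: leq_trans K_lt (bigminn_le _ _ _); rewrite hH.
by move=> /existsP []; exists h; rewrite hH.
Qed.

Lemma DH_Sym_lt n (H : {group {perm 'I_n}}) C :
  (3 ^ 14 <= n)%N -> min_degree_gt H (7 * (2 * C.+1 + 1)) ->
  (forall k, k <= n -> #|[set h in H | supp h == k]| ^ 7 <= n ^ k)%N ->
  DH (Sym_n n) H < (n ^ C)%:R^-1.
Proof.
move=> n_large large_degree few_supp.
have n_gt0 : (0 < n)%N by lia.
set a := fun k => #|[set h in H | supp h == k]|; set E := (2 * n ^ C.+1)%N.
have a_gt0 h : h \in H -> (0 < a (supp h))%N.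
  by move=> hH; rewrite card_gt0; apply/set0Pn; exists h; rewrite inE hH /=.
apply: le_lt_trans (DH_le_sum_inv (f := fun h => (E * a (supp h))%:R) _ _ _) _.
- exact: subsetT.
- by move=> h hH _; rewrite ltr0n /E !muln_gt0 expn_gt0 n_gt0 a_gt0.
- move=> h hH h1; rewrite /Sym_n /= setTI cardsT card_Sn -natrX -natrM ler_nat.
  apply: sq_mul_card_cent1_le => //; last exact: few_supp (supp_le h).
  exact: ltnW (min_degree_gt_supp large_degree hH h1).
apply: (@le_lt_trans _ _ (E%:R^-1 * \sum_(h in H) (a (supp h))%:R^-1)).
  rewrite (eq_bigr (fun h => E%:R^-1 / (a (supp h))%:R)) => [|h _]; last first.
    by rewrite natrM invfM.
  rewrite mulr_sumr [X in _ <= X](bigID (fun h => h != 1%g)) /= lerDl.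
  by rewrite sumr_ge0 // => h _; rewrite mulr_ge0 ?invr_ge0 ?ler0n.
apply: (@le_lt_trans _ _ (E%:R^-1 * n.+1%:R)).
  rewrite ler_wpM2l ?invr_ge0 ?ler0n //.
  by apply: sum_inv_card_fiber_le => h _; exact: supp_le.
have -> : E = (n ^ C * n.*2)%N by rewrite /E expnSr mulnCA -mul2n.
rewrite mulrC ltr_pdivrMr ?ltr0n ?muln_gt0 ?expn_gt0 ?double_gt0 ?n_gt0 // natrM.
by rewrite mulrA mulVf ?pnatr_eq0 -?lt0n ?expn_gt0 ?n_gt0 // mul1r ltr_nat -addnn; lia.
Qed.

Lemma expn_le_of_le_Rpower (n k a d : nat) : (0 < n)%N -> (0 < d)%N ->
  a%:R <= Rpower n%:R (k%:R / d%:R) :> R -> (a ^ d <= n ^ k)%N.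
Proof.
move=> n_gt0 d_gt0 a_le; set y := Rpower _ _ in a_le.
have nR_gt0 : (0 : R) < n%:R by rewrite ltr0n.
have y_gt0 : 0 < y by apply/RltP/Exp_prop.exp_pos.
have y_pow : y ^+ d = n%:R ^+ k.
  rewrite -!RpowE -!Rpower.Rpower_pow; try exact/RltP.
  by rewrite Rpower.Rpower_mult !INRE RmultE divfK // pnatr_eq0 -lt0n.
by rewrite -(ler_nat R) !natrX -y_pow lerXn2r // nnegrE ?ler0n ?(ltW y_gt0).
Qed.

Lemma ln_lt (x : R) : 0 < x -> ln x < x.
Proof.
move=> x_gt0; have := Rpower.exp_ineq1_le (ln x).
rewrite Rpower.exp_ln; last exact/RltP.
by move/RleP; rewrite RplusE R1E; lra.
Qed.

Lemma ln_le (x y : R) : 0 < x -> x <= y -> ln x <= ln y.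
Proof.
move=> x_gt0; rewrite le_eqVlt => /predU1P [-> // | lt_xy].
by apply/ltW/RltP/Rpower.ln_increasing; apply/RltP.
Qed.

Lemma ln_fact_ge1 n : (3 <= n)%N -> 1 <= ln n`!%:R.
Proof.
move=> n_ge3; rewrite -[X in X <= _](Rpower.ln_exp 1) ln_le //.
  exact/RltP/Exp_prop.exp_pos.
apply: le_trans (_ : 3 <= _); first exact/RleP/Rpower.exp_le_3.
by rewrite ler_nat (leq_trans n_ge3) ?fact_geq.
Qed.

Lemma ln_fact_lt n : (0 < n)%N -> ln n`!%:R < (n * n)%:R.
Proof.
move=> n_gt0; have nR_gt0 : (0 : R) < n%:R by rewrite ltr0n.
apply: (@le_lt_trans _ _ (ln (n ^ n)%:R)).
  by rewrite ln_le ?ltr0n ?fact_gt0 // ler_nat fact_le_expn.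
rewrite natrX -RpowE Rpower.ln_pow; last exact/RltP.
by rewrite RmultE INRE natrM ltr_pM2l // ln_lt.
Qed.

Lemma inv_expn_lt_Rpower_ln_fact (c : R) (C n : nat) :
  0 < c -> c <= C%:R -> (3 <= n)%N ->
  ratr ((n ^ (2 * C))%:R^-1 : rat) < Rpower (ln n`!%:R) (- c).
Proof.
move=> c_gt0 le_cC n_ge3; set L := ln _.
have L_ge1 : 1 <= L := ln_fact_ge1 n_ge3.
have L_gt0 : 0 < L by apply: lt_le_trans L_ge1.
have C_gt0 : (0 < C)%N by rewrite -(ltr_nat R); apply: lt_le_trans le_cC.
have n_gt0 : (0 < n)%N by apply: leq_trans n_ge3.
rewrite fmorphV rmorph_nat Rpower.Rpower_Ropp RinvE.
rewrite ltf_pV2 ?posrE ?ltr0n ?expn_gt0 ?n_gt0 //; last exact/RltP/Exp_prop.exp_pos.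
apply: (@le_lt_trans _ _ (Rpower L C%:R)).
  by apply/RleP/Rpower.Rle_Rpower; apply/RleP.
rewrite -INRE Rpower.Rpower_pow; last exact/RltP.
by rewrite RpowE expnM natrX ltrXn2r -?lt0n ?(ltW L_gt0) // ln_fact_lt.
Qed.

Theorem proposition1 (I : nat -> Prop) (H : forall n : nat, {group {perm 'I_n}}) :
  (forall n, I n -> (0 < n)%N) ->
  (forall N : nat, exists n, (N < n)%N /\ I n) ->
  (forall K N : nat, exists n, (N < n)%N /\ I n /\ min_degree_gt (H n) K) ->
  (forall n k : nat, I n -> (k <= n)%N ->
     #|[set h in H n | supp h == k]|%:R <= Rpower n%:R (k%:R / 7%:R) :> R) ->
  @indistinguishable I (fun n => {perm 'I_n}) (fun n => Sym_n n) H.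
Proof.
move=> _ _ unbounded few_supp [c [c_gt0 [N distinguished]]].
pose C := Num.Def.archi_bound c.
have le_cC : c <= C%:R by apply/ltW/archi_boundP/ltW.
have [n [lt_Nn [In large_degree]]] :=
  unbounded (7 * (2 * (2 * C).+1 + 1))%N (maxn N (3 ^ 14)).
move: lt_Nn; rewrite gtn_max => /andP [/ltnW le_Nn /ltnW n_large].
have n_ge3 : (3 <= n)%N by lia.
have := distinguished n In le_Nn; rewrite /= cardsT card_Sn => DH_ge.
have := DH_ge _ (inv_expn_lt_Rpower_ln_fact c_gt0 le_cC n_ge3).
rewrite fmorphV rmorph_nat lt_geF // DH_Sym_lt // => k le_kn.
by apply: expn_le_of_le_Rpower; rewrite ?few_supp //; lia.
Qed.
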